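(* Let $\alpha,g_0,\lambda,\kappa_0,\omega>0$, let $k>l\ge0$ be integers and put $n=k-l$. For $\Delta\tau>0$ and real $b\neq b'$ define $$I_{kl}(b,b')=\frac{1}{\kappa_0\pi}\int_{-\infty}^{\infty}e^{-i\alpha g_0\Delta\tau\,\omega n\, q}\,\frac{\sin[\kappa_0(q-\frac{2\lambda b}{\alpha g_0\Delta\tau})]}{q-\frac{2\lambda b}{\alpha g_0\Delta\tau}}\,\frac{\sin[\kappa_0(q-\frac{2\lambda b'}{\alpha g_0\Delta\tau})]}{q-\frac{2\lambda b'}{\alpha g_0\Delta\tau}}\,dq.$$ Then $$I_{kl}(b,b')=\frac{i\alpha g_0\Delta\tau}{4\lambda\kappa_0}\,V_{kl}(b,b')\,\Theta(2\kappa_0-\omega\alpha g_0 n\Delta\tau),$$ $$V_{kl}(b,b')=\frac{e^{-2i\lambda\left[\frac{\kappa_0}{\alpha g_0\Delta\tau}(b-b')+\omega n b'\right]}-e^{2i\lambda\left[\frac{\kappa_0}{\alpha g_0\Delta\tau}(b-b')-\omega n b\right]}}{b-b'},$$ with $\Theta$ the Heaviside step function, and $V_{kl}=0$ at $\Delta\tau=2\kappa_0/(\alpha g_0\omega n)$. Consequently all decoherence factors with $k\neq l$ vanish for $\Delta\tau\ge\frac{2\kappa_0}{\alpha g_0\omega}$.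
   Context: This is the decoherence factor for measuring the energy of a quantum harmonic oscillator (eigenvalues $(k+\tfrac12)\hbar\omega$) with probe initial state $\frac{1}{\sqrt{\kappa_0\pi}}\frac{\sin(\kappa_0 q)}{q}$; the factors with $k<l$ are the complex conjugates $I_{lk}=\overline{I_{kl}}$. *)

(* classical reals. Complex numbers are represented by their
   real and imaginary parts (Stdlib has no complex numbers). *)
From Stdlib Require Import Reals.
Open Scope R_scope.

Definition Ksinc (k x : R) : R :=
  if Req_EM_T x 0 then k else sin (k * x) / x.

Definition improper_integral (f : R -> R) (L : R) : Prop :=
  (forall a b : R, inhabited (Riemann_integrable f a b)) /\
  (forall eps : R, 0 < eps -> exists M : R, forall a b : R,
      a <= - M -> M <= b ->
      forall pr : Riemann_integrable f a b, Rabs (RiemannInt pr - L) < eps).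

(* Heaviside step function (the value at 0 is irrelevant here, since V vanishes there). *)
Definition Heaviside (x : R) : R := if Rle_dec 0 x then 1 else 0.

Definition ctr (alpha g0 lam dtau b : R) : R := 2 * lam * b / (alpha * g0 * dtau).

(* Real and imaginary parts of the integrand of I_kl(b,b') (including the
   prefactor 1/(kappa0 pi)); n = k - l. Note e^{-i t} = cos t - i sin t. *)
Definition integrand_re (alpha g0 lam kappa0 omega n dtau b b' q : R) : R :=
  / (kappa0 * PI) * cos (alpha * g0 * dtau * omega * n * q)
  * Ksinc kappa0 (q - ctr alpha g0 lam dtau b)
  * Ksinc kappa0 (q - ctr alpha g0 lam dtau b').

Definition integrand_im (alpha g0 lam kappa0 omega n dtau b b' q : R) : R :=
  - (/ (kappa0 * PI) * sin (alpha * g0 * dtau * omega * n * q)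
  * Ksinc kappa0 (q - ctr alpha g0 lam dtau b)
  * Ksinc kappa0 (q - ctr alpha g0 lam dtau b')).

(* phases: V = (e^{-i A} - e^{i B}) / (b - b') *)
Definition phaseA (alpha g0 lam kappa0 omega n dtau b b' : R) : R :=
  2 * lam * (kappa0 / (alpha * g0 * dtau) * (b - b') + omega * n * b').
Definition phaseB (alpha g0 lam kappa0 omega n dtau b b' : R) : R :=
  2 * lam * (kappa0 / (alpha * g0 * dtau) * (b - b') - omega * n * b).

Definition V_re (alpha g0 lam kappa0 omega n dtau b b' : R) : R :=
  (cos (phaseA alpha g0 lam kappa0 omega n dtau b b')
   - cos (phaseB alpha g0 lam kappa0 omega n dtau b b')) / (b - b').
Definition V_im (alpha g0 lam kappa0 omega n dtau b b' : R) : R :=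
  (- sin (phaseA alpha g0 lam kappa0 omega n dtau b b')
   - sin (phaseB alpha g0 lam kappa0 omega n dtau b b')) / (b - b').

(* RHS = (i c) * (V_re + i V_im) * Theta, with c = alpha g0 dtau / (4 lambda kappa0) *)
Definition rhs_re (alpha g0 lam kappa0 omega n dtau b b' : R) : R :=
  - (alpha * g0 * dtau / (4 * lam * kappa0)) * V_im alpha g0 lam kappa0 omega n dtau b b'
  * Heaviside (2 * kappa0 - omega * alpha * g0 * n * dtau).
Definition rhs_im (alpha g0 lam kappa0 omega n dtau b b' : R) : R :=
  (alpha * g0 * dtau / (4 * lam * kappa0)) * V_re alpha g0 lam kappa0 omega n dtau b b'
  * Heaviside (2 * kappa0 - omega * alpha * g0 * n * dtau).

From Coquelicot Require Import Coquelicot.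
From Stdlib Require Import Reals Lra Lia.
Open Scope R_scope.

(* Shifting q by the first centre turns each integrand into
   cos (xi u + ph) sinc(u) sinc(u + d), with d the difference of the centres.
   Partial fractions 1 / (u (u + d)) = (1 / u - 1 / (u + d)) / d split it into two
   terms of the form cos (xi u + ph) sin (ka (u + d)) sin (ka u) / u, whose symmetric
   integrals reduce, by the product-to-sum formulas, to four Dirichlet integrals
   int_0^oo sin (nu u) / u = pi / 2 * sign nu with nu = 2 ka + xi, - xi, xi, 2 ka - xi.
   Only sign (2 ka - xi) survives, which produces the step function.  Shifting one
   term back by d costs O(1/B), and the 1 / u^2 decay of the integrand upgrades
   symmetric convergence to convergence of the improper integral.  The Dirichlet
   integral itself is obtained with an explicit rate from the Dirichlet kernel,
   int_0^(pi/2) sin ((2n+1) x) / sin x dx = pi / 2, and Abel's bound against the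
   increasing weight 1 / sin x - 1 / x. *)

Lemma Rabs_sin_le y : Rabs (sin y) <= Rabs y.
Proof.
  assert (Hpos : forall t, 0 < t -> Rabs (sin t) <= t).
  { intros t Ht. pose proof (sin_lt_x t Ht). apply Rabs_le. split; [|lra].
    destruct (Rle_lt_dec 1 t).
    - pose proof (SIN_bound t). lra.
    - assert (0 < sin t) by (apply sin_gt_0; pose proof PI2_1; lra). lra. }
  destruct (Rtotal_order y 0) as [Hy|[->|Hy]].
  - rewrite <- Rabs_Ropp, <- sin_neg, (Rabs_left y) by lra. apply Hpos. lra.
  - rewrite sin_0. lra.
  - rewrite (Rabs_pos_eq y) by lra. now apply Hpos.
Qed.

Lemma Rabs_sin_le_1 y : Rabs (sin y) <= 1.
Proof. apply Rabs_le, SIN_bound. Qed.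

Lemma Rabs_cos_le_1 y : Rabs (cos y) <= 1.
Proof. apply Rabs_le, COS_bound. Qed.

Lemma KsincE k x : x <> 0 -> Ksinc k x = sin (k * x) / x.
Proof. intros Hx. unfold Ksinc. destruct (Req_EM_T x 0); [contradiction|reflexivity]. Qed.

Lemma Ksinc_0 k : Ksinc k 0 = k.
Proof. unfold Ksinc. destruct (Req_EM_T 0 0); [reflexivity|contradiction]. Qed.

Lemma Ksinc_le k x : Rabs (Ksinc k x) <= Rabs k.
Proof.
  destruct (Req_EM_T x 0) as [->|Hx].
  - rewrite Ksinc_0. lra.
  - rewrite KsincE by auto. unfold Rdiv. rewrite Rabs_mult, Rabs_inv.
    apply (Rmult_le_reg_r (Rabs x)); [now apply Rabs_pos_lt|].
    rewrite Rmult_assoc, Rinv_l, Rmult_1_r, <- Rabs_mult by now apply Rabs_no_R0.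
    apply Rabs_sin_le.
Qed.

Lemma Ksinc_le_inv k x : x <> 0 -> Rabs (Ksinc k x) <= / Rabs x.
Proof.
  intros Hx. rewrite KsincE by auto. unfold Rdiv. rewrite Rabs_mult, Rabs_inv.
  pose proof (Rabs_sin_le_1 (k * x)). pose proof (Rabs_pos (sin (k * x))).
  assert (0 < / Rabs x) by (apply Rinv_0_lt_compat, Rabs_pos_lt; auto).
  nra.
Qed.

Lemma Ksinc_oppk k x : Ksinc (- k) x = - Ksinc k x.
Proof.
  destruct (Req_EM_T x 0) as [->|Hx].
  - rewrite !Ksinc_0. ring.
  - rewrite !KsincE by auto. replace (- k * x) with (- (k * x)) by ring.
    rewrite sin_neg. field. auto.
Qed.

Lemma Ksinc_oppx k x : Ksinc k (- x) = Ksinc k x.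
Proof.
  destruct (Req_EM_T x 0) as [->|Hx].
  - now rewrite Ropp_0.
  - rewrite !KsincE by lra. replace (k * - x) with (- (k * x)) by ring.
    rewrite sin_neg. field. auto.
Qed.

Lemma Ksinc_0k x : Ksinc 0 x = 0.
Proof.
  destruct (Req_EM_T x 0) as [->|Hx].
  - now rewrite Ksinc_0.
  - rewrite KsincE, Rmult_0_l, sin_0 by auto. field. auto.
Qed.

Lemma continuous_Ksinc k x : continuous (Ksinc k) x.
Proof.
  destruct (Req_EM_T x 0) as [->|Hx].
  - (* at 0, continuity is the derivative of sin (k y) at 0 *)
    apply continuity_pt_filterlim, continuity_pt_locally. intros eps.
    assert (Hd : derivable_pt_lim (fun y => sin (k * y)) 0 k).
    { apply is_derive_Reals. auto_derive; auto. rewrite Rmult_0_r, cos_0. ring. }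
    destruct (Hd eps (cond_pos eps)) as [del Hdel].
    exists del. intros y Hy. change (Rabs (y - 0) < del) in Hy.
    rewrite Ksinc_0. destruct (Req_EM_T y 0) as [->|Hy0].
    + rewrite Ksinc_0, Rminus_diag, Rabs_R0. apply cond_pos.
    + rewrite KsincE by auto. rewrite Rminus_0_r in Hy.
      specialize (Hdel y Hy0 Hy).
      rewrite Rplus_0_l, Rmult_0_r, sin_0, Rminus_0_r in Hdel. exact Hdel.
  - apply continuous_ext_loc with (fun y => sin (k * y) / y).
    + destruct (Rlt_dec 0 x) as [Hp|Hn].
      * apply locally_interval with (Finite 0) p_infty; simpl; auto.
        intros y Hy _. rewrite KsincE; auto. lra.
      * apply locally_interval with m_infty (Finite 0); simpl; auto; [lra|].
        intros y _ Hy. rewrite KsincE; auto. lra.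
    + apply (ex_derive_continuous (V := R_NormedModule)). auto_derive. auto.
Qed.

Ltac solve_neq0 := repeat match goal with
  | |- _ /\ _ => split
  | |- True => exact I
  | |- _ <> 0 => apply Rgt_not_eq; nra
  | |- _ <> 0 => apply Rlt_not_eq; nra
  end.

Lemma continuous_mulR (f g : R -> R) x :
  continuous f x -> continuous g x -> continuous (fun y => f y * g y) x.
Proof. apply (continuous_mult f g x). Qed.

Lemma continuous_shiftR (f : R -> R) c x :
  (forall y, continuous f y) -> continuous (fun u => f (u + c)) x.
Proof.
  intros Hf. apply (continuous_comp (fun u => u + c) f x); [|apply Hf].
  apply (ex_derive_continuous (V := R_NormedModule)). auto_derive. auto.
Qed.

Lemma ex_RInt_cont_on (f : R -> R) a b :
  (forall x, Rmin a b <= x <= Rmax a b -> continuous f x) -> ex_RInt f a b.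
Proof. apply (@ex_RInt_continuous R_CompleteNormedModule). Qed.

Lemma ex_RInt_cont (f : R -> R) a b : (forall x, continuous f x) -> ex_RInt f a b.
Proof. intros H. apply ex_RInt_cont_on. intros; apply H. Qed.

Lemma RInt_plusR (f g : R -> R) a b : ex_RInt f a b -> ex_RInt g a b ->
  (RInt (fun x => f x + g x) a b : R) = RInt f a b + RInt g a b.
Proof. apply (RInt_plus f g a b). Qed.

Lemma RInt_minusR (f g : R -> R) a b : ex_RInt f a b -> ex_RInt g a b ->
  (RInt (fun x => f x - g x) a b : R) = RInt f a b - RInt g a b.
Proof. apply (RInt_minus f g a b). Qed.

Lemma RInt_scalR (f : R -> R) c a b : ex_RInt f a b ->
  (RInt (fun x => c * f x) a b : R) = c * RInt f a b.
Proof. apply (RInt_scal f a b c). Qed.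

Lemma RInt_ChaslesR (f : R -> R) a b c : ex_RInt f a b -> ex_RInt f b c ->
  RInt f a b + RInt f b c = RInt f a c.
Proof. apply (RInt_Chasles f a b c). Qed.

Lemma RInt_swapR (f : R -> R) a b : ex_RInt f a b -> (RInt f b a : R) = - RInt f a b.
Proof. intros. symmetry. apply (opp_RInt_swap f a b). auto. Qed.

Lemma RInt_extR (f g : R -> R) a b : (forall x, Rmin a b < x < Rmax a b -> f x = g x) ->
  (RInt f a b : R) = RInt g a b.
Proof. apply RInt_ext. Qed.

Lemma RInt_affineR (f : R -> R) u v a b : (forall x, continuous f x) ->
  (RInt (fun y => u * f (u * y + v)) a b : R) = RInt f (u * a + v) (u * b + v).
Proof. intros Hc. apply (RInt_comp_lin f u v a b). now apply ex_RInt_cont. Qed.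

Lemma RInt_shiftR (f : R -> R) c a b : (forall x, continuous f x) ->
  (RInt (fun u => f (u + c)) a b : R) = RInt f (a + c) (b + c).
Proof.
  intros Hc. replace (a + c) with (1 * a + c) by ring.
  replace (b + c) with (1 * b + c) by ring.
  rewrite <- RInt_affineR by auto.
  apply RInt_extR. intros x _. now rewrite !Rmult_1_l.
Qed.

Lemma RInt_symmetricR (f : R -> R) B : (forall x, continuous f x) ->
  (RInt f (- B) B : R) = RInt (fun u => f u + f (- u)) 0 B.
Proof.
  intros Hc.
  assert (Hc' : forall x, continuous (fun u => f (- u)) x).
  { intros x. apply (continuous_comp (fun u : R => - u) f x); [|apply Hc].
    apply (ex_derive_continuous (V := R_NormedModule)). auto_derive. auto. }
  assert (Hrefl : (RInt (fun u => f (- u)) 0 B : R) = RInt f (- B) 0).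
  { assert (H := RInt_affineR f (-1) 0 0 B Hc).
    replace (-1 * 0 + 0) with 0 in H by ring. replace (-1 * B + 0) with (- B) in H by ring.
    rewrite (RInt_swapR f 0 (- B)), <- H by now apply ex_RInt_cont.
    rewrite (RInt_extR (fun y => -1 * f (-1 * y + 0)) (fun y => -1 * f (- y)))
      by (intros x _; do 2 f_equal; lra).
    rewrite RInt_scalR by now apply ex_RInt_cont.
    lra. }
  rewrite RInt_plusR, Hrefl by now apply ex_RInt_cont.
  rewrite Rplus_comm. symmetry. apply RInt_ChaslesR; now apply ex_RInt_cont.
Qed.

Lemma RInt_Ksinc_scale nu B : 0 < nu -> (RInt (Ksinc nu) 0 B : R) = RInt (Ksinc 1) 0 (nu * B).
Proof.
  intros Hn. replace (nu * B) with (nu * B + 0) by ring.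
  replace 0 with (nu * 0 + 0) at 2 by ring.
  rewrite <- RInt_affineR by apply continuous_Ksinc.
  apply RInt_extR. intros x _. rewrite Rplus_0_r.
  destruct (Req_EM_T x 0) as [->|Hx].
  - rewrite Rmult_0_r, !Ksinc_0. ring.
  - rewrite !KsincE by (auto; apply Rmult_integral_contrapositive; split; lra).
    rewrite Rmult_1_l. field. split; lra.
Qed.

Lemma Rabs_RInt_le (f g : R -> R) a b : a <= b -> ex_RInt f a b -> ex_RInt g a b ->
  (forall x, a < x < b -> Rabs (f x) <= g x) -> Rabs (RInt f a b) <= RInt g a b.
Proof.
  intros Hab Hf Hg H. apply Rle_trans with (RInt (fun t => Rabs (f t)) a b).
  - apply abs_RInt_le; auto.
  - apply RInt_le; auto. apply ex_RInt_norm; auto.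
Qed.

Lemma Rabs_RInt_le_const (f : R -> R) a b K : (forall x, continuous f x) ->
  (forall x, Rmin a b <= x <= Rmax a b -> Rabs (f x) <= K) ->
  Rabs (RInt f a b) <= Rabs (b - a) * K.
Proof.
  intros Hc H. destruct (Rle_dec a b) as [Hab|Hab].
  - rewrite (Rabs_pos_eq (b - a)) by lra.
    apply abs_RInt_le_const; auto; [now apply ex_RInt_cont|].
    intros x Hx. apply H. rewrite Rmin_left, Rmax_right; lra.
  - rewrite RInt_swapR, Rabs_Ropp by now apply ex_RInt_cont.
    rewrite (Rabs_left (b - a)) by lra.
    replace (- (b - a)) with (a - b) by ring.
    apply abs_RInt_le_const; [lra|now apply ex_RInt_cont|].
    intros x Hx. apply H. rewrite Rmin_right, Rmax_left; lra.
Qed.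

Lemma is_derive_mulR (f g : R -> R) x df dg : is_derive f x df -> is_derive g x dg ->
  is_derive (fun y => f y * g y) x (df * g x + f x * dg).
Proof. intros Hf Hg. apply (is_derive_mult f g); auto. intros; apply Rmult_comm. Qed.

Lemma RInt_sin_mul_by_parts (h dh : R -> R) M a b : M <> 0 ->
  (forall x, Rmin a b <= x <= Rmax a b -> is_derive h x (dh x)) ->
  (forall x, Rmin a b <= x <= Rmax a b -> continuous dh x) ->
  (RInt (fun x => sin (M * x) * h x) a b : R)
  = cos (M * a) / M * h a - cos (M * b) / M * h b + RInt (fun x => cos (M * x) / M * dh x) a b.
Proof.
  intros HM Hd Hc.
  assert (Hh : forall x, Rmin a b <= x <= Rmax a b -> continuous h x).
  { intros x Hx. apply (ex_derive_continuous (V := R_NormedModule)). eexists. now apply Hd. }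
  assert (Hwave : forall x, continuous (fun y => cos (M * y) / M) x).
  { intros x. apply (ex_derive_continuous (V := R_NormedModule)). auto_derive. auto. }
  assert (Hex : ex_RInt (fun x => cos (M * x) / M * dh x) a b).
  { apply ex_RInt_cont_on. intros x Hx. apply continuous_mulR; auto. }
  assert (Dparts : is_RInt (fun x => sin (M * x) * h x - cos (M * x) / M * dh x) a b
                     (- cos (M * b) / M * h b - - cos (M * a) / M * h a)).
  { apply (is_RInt_derive (fun x => - cos (M * x) / M * h x)); intros x Hx.
    - assert (Dw : is_derive (fun y => - cos (M * y) / M) x (sin (M * x))).
      { auto_derive; auto. field. auto. }
      replace (sin (M * x) * h x - cos (M * x) / M * dh x)
        with (sin (M * x) * h x + - cos (M * x) / M * dh x) by lra.
      apply (is_derive_mulR _ h x _ _ Dw (Hd x Hx)).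
    - apply (continuous_minus (V := R_NormedModule)); apply continuous_mulR; auto.
      apply (ex_derive_continuous (V := R_NormedModule)). auto_derive. auto. }
  rewrite (RInt_extR _ (fun x => (sin (M * x) * h x - cos (M * x) / M * dh x)
                                 + cos (M * x) / M * dh x)) by (intros; ring).
  rewrite RInt_plusR, (is_RInt_unique _ _ _ _ Dparts) by (auto; eexists; eauto).
  field. auto.
Qed.

Lemma is_RInt_inv_sqr C x y : 0 < x * y -> is_RInt (fun u => C / (u * u)) x y (C / x - C / y).
Proof.
  intros Hxy.
  assert (Hz : forall u, Rmin x y <= u <= Rmax x y -> u <> 0).
  { intros u Hu. unfold Rmin, Rmax in Hu. destruct (Rle_dec x y); intros ->; nra. }
  replace (C / x - C / y) with (- C / y - - C / x) by (field; split; intros ->; nra).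
  apply (is_RInt_derive (fun u => - C / u)); intros u Hu; specialize (Hz u Hu).
  - auto_derive; auto. field. auto.
  - apply (ex_derive_continuous (V := R_NormedModule)). auto_derive.
    repeat split; auto; apply Rmult_integral_contrapositive; auto.
Qed.

Lemma RInt_sinc_tail_le A B : 0 < A <= B -> Rabs (RInt (Ksinc 1) A B) <= 2 / A.
Proof.
  intros [HA HAB].
  assert (Hin : forall x, Rmin A B <= x <= Rmax A B -> 0 < x).
  { intros x Hx. rewrite Rmin_left in Hx; lra. }
  rewrite (RInt_extR _ (fun t => sin (1 * t) * (1 / t)))
    by (intros x Hx; rewrite KsincE by (specialize (Hin x); lra); field; specialize (Hin x); lra).
  rewrite (RInt_sin_mul_by_parts _ (fun t => - 1 / (t * t))); try lra.
  2: { intros x Hx. specialize (Hin x Hx). auto_derive; [lra|]. field. lra. }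
  2: { intros x Hx. specialize (Hin x Hx).
       apply (ex_derive_continuous (V := R_NormedModule)). auto_derive. solve_neq0. }
  assert (Hinv := is_RInt_inv_sqr 1 A B ltac:(nra)).
  assert (Hmid : Rabs (RInt (fun x => cos (1 * x) / 1 * (- 1 / (x * x))) A B) <= 1 / A - 1 / B).
  { rewrite <- (is_RInt_unique _ _ _ _ Hinv).
    apply Rabs_RInt_le; [lra| |eexists; eauto|].
    - apply ex_RInt_cont_on. intros x Hx. specialize (Hin x Hx).
      apply (ex_derive_continuous (V := R_NormedModule)). auto_derive. solve_neq0.
    - intros x Hx. replace (cos (1 * x) / 1 * (- 1 / (x * x))) with (- cos x * (1 / (x * x)))
        by (rewrite Rmult_1_l; field; lra).
      rewrite Rabs_mult, Rabs_Ropp, (Rabs_pos_eq (1 / (x * x)))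
        by (apply Rlt_le, Rdiv_lt_0_compat; nra).
      pose proof (Rabs_cos_le_1 x). assert (0 < 1 / (x * x)) by (apply Rdiv_lt_0_compat; nra).
      nra. }
  assert (Hbdry : forall t, 0 < t -> Rabs (cos (1 * t) / 1 * (1 / t)) <= 1 / t).
  { intros t Ht. rewrite Rmult_1_l, Rdiv_1_r, Rabs_mult, (Rabs_pos_eq (1 / t))
      by (apply Rlt_le, Rdiv_lt_0_compat; lra).
    pose proof (Rabs_cos_le_1 t). assert (0 < 1 / t) by (apply Rdiv_lt_0_compat; lra). nra. }
  pose proof (Hbdry A HA). pose proof (Hbdry B ltac:(lra)).
  eapply Rle_trans; [apply Rabs_triang|]. unfold Rminus at 1.
  eapply Rle_trans; [apply Rplus_le_compat_r, Rabs_triang|]. rewrite Rabs_Ropp.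
  assert (0 <= 1 / B) by (apply Rlt_le, Rdiv_lt_0_compat; lra).
  replace (2 / A) with (1 / A + 1 / A) by (field; lra). lra.
Qed.

Fixpoint dirichlet_kernel (n : nat) (x : R) : R :=
  match n with
  | O => 1
  | S m => dirichlet_kernel m x + 2 * cos (2 * INR (S m) * x)
  end.

Lemma continuous_dirichlet_kernel n x : continuous (dirichlet_kernel n) x.
Proof.
  apply (ex_derive_continuous (V := R_NormedModule)).
  induction n as [|n IH]; simpl.
  - apply ex_derive_const.
  - apply (ex_derive_plus (dirichlet_kernel n) (fun x => 2 * cos (2 * INR (S n) * x))); auto.
    auto_derive. auto.
Qed.

Lemma RInt_two_cos_half_pi m : 0 < m ->
  (RInt (fun x => 2 * cos (2 * m * x)) 0 (PI / 2) : R) = sin (m * PI) / m.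
Proof.
  intros Hm.
  assert (D : is_RInt (fun x => 2 * cos (2 * m * x)) 0 (PI / 2)
                (sin (2 * m * (PI / 2)) / m - sin (2 * m * 0) / m)).
  { apply (is_RInt_derive (fun x => sin (2 * m * x) / m)); intros x _.
    - auto_derive; [solve_neq0|]. field. solve_neq0.
    - apply (ex_derive_continuous (V := R_NormedModule)). auto_derive. auto. }
  rewrite (is_RInt_unique _ _ _ _ D).
  replace (2 * m * (PI / 2)) with (m * PI) by field.
  rewrite Rmult_0_r, sin_0. field. solve_neq0.
Qed.

Lemma RInt_dirichlet_kernel n : (RInt (dirichlet_kernel n) 0 (PI / 2) : R) = PI / 2.
Proof.
  induction n as [|n IH].
  - simpl. rewrite RInt_const. unfold scal; simpl; unfold mult; simpl. ring.
  - change (dirichlet_kernel (S n))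
      with (fun x => dirichlet_kernel n x + 2 * cos (2 * INR (S n) * x)).
    rewrite RInt_plusR, IH, RInt_two_cos_half_pi.
    + assert (sin (INR (S n) * PI) = 0) as ->.
      { apply sin_eq_0_1. exists (Z.of_nat (S n)). now rewrite <- INR_IZR_INZ. }
      field. apply not_0_INR. lia.
    + apply lt_0_INR. lia.
    + apply ex_RInt_cont, continuous_dirichlet_kernel.
    + apply ex_RInt_cont. intros x. apply (ex_derive_continuous (V := R_NormedModule)).
      auto_derive. auto.
Qed.

Lemma sin_mul_dirichlet_kernel n x :
  sin x * dirichlet_kernel n x = sin ((2 * INR n + 1) * x).
Proof.
  induction n as [|n IH].
  - simpl. rewrite Rmult_1_r. f_equal. ring.
  - change (dirichlet_kernel (S n) x)
      with (dirichlet_kernel n x + 2 * cos (2 * INR (S n) * x)).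
    rewrite Rmult_plus_distr_l, IH, S_INR.
    replace ((2 * (INR n + 1) + 1) * x) with ((2 * INR n + 1) * x + 2 * x) by ring.
    replace (2 * (INR n + 1) * x) with ((2 * INR n + 1) * x + x) by ring.
    set (a := (2 * INR n + 1) * x).
    rewrite sin_plus, cos_plus, sin_2a, cos_2a.
    pose proof (sin2_cos2 x) as E. unfold Rsqr in E.
    rewrite <- (Rmult_1_r (sin a)) at 1. rewrite <- E. ring.
Qed.

Lemma Rabs_dirichlet_kernel_le n x : Rabs (dirichlet_kernel n x) <= 2 * INR n + 1.
Proof.
  induction n as [|n IH].
  - simpl. rewrite Rabs_R1. lra.
  - change (dirichlet_kernel (S n) x)
      with (dirichlet_kernel n x + 2 * cos (2 * INR (S n) * x)).
    eapply Rle_trans; [apply Rabs_triang|].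
    pose proof (Rabs_cos_le_1 (2 * INR (S n) * x)).
    rewrite Rabs_mult, (Rabs_pos_eq 2) by lra. rewrite S_INR in *. lra.
Qed.

Lemma Rabs_RInt_sin_mul_le (h dh : R -> R) M a b : 0 < M -> a <= b ->
  (forall x, a <= x <= b -> is_derive h x (dh x)) ->
  (forall x, a <= x <= b -> continuous dh x) ->
  (forall x, a <= x <= b -> 0 <= dh x) -> 0 <= h a ->
  Rabs (RInt (fun x => sin (M * x) * h x) a b) <= 2 * h b / M.
Proof.
  intros HM Hab Hd Hc Hpos Ha.
  assert (Hin : forall x, Rmin a b <= x <= Rmax a b -> a <= x <= b).
  { intros x. rewrite Rmin_left, Rmax_right; lra. }
  assert (Dh : is_RInt dh a b (h b - h a)).
  { apply (is_RInt_derive h); auto. }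
  assert (Hhb : h a <= h b).
  { apply Rminus_le_0. rewrite <- (is_RInt_unique _ _ _ _ Dh).
    apply RInt_ge_0; [lra|eexists; eauto|]. intros x Hx. apply Hpos. lra. }
  rewrite RInt_sin_mul_by_parts with (dh := dh); auto; try lra.
  assert (Hmid : Rabs (RInt (fun x => cos (M * x) / M * dh x) a b) <= (h b - h a) / M).
  { rewrite <- (is_RInt_unique _ _ _ _ Dh). unfold Rdiv at 2.
    rewrite Rmult_comm, <- RInt_scalR by (eexists; eauto).
    apply Rabs_RInt_le; auto;
      [apply ex_RInt_cont_on; intros x Hx; apply continuous_mulR; auto;
       apply (ex_derive_continuous (V := R_NormedModule)); auto_derive; lra
      |apply (ex_RInt_scal dh a b (/ M)); eexists; eauto|].
    intros x Hx. specialize (Hpos x ltac:(lra)).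
    unfold Rdiv. rewrite !Rabs_mult, Rabs_inv, (Rabs_pos_eq M), (Rabs_pos_eq (dh x)) by lra.
    pose proof (Rabs_cos_le_1 (M * x)). assert (0 < / M) by (apply Rinv_0_lt_compat; lra).
    assert (0 <= / M * dh x) by (apply Rmult_le_pos; lra). nra. }
  assert (Hbdry : Rabs (cos (M * a) / M * h a - cos (M * b) / M * h b) <= (h b + h a) / M).
  { replace (cos (M * a) / M * h a - cos (M * b) / M * h b)
      with ((cos (M * a) * h a - cos (M * b) * h b) / M) by (field; lra).
    unfold Rdiv. rewrite Rabs_mult, Rabs_inv, (Rabs_pos_eq M) by lra.
    apply Rmult_le_compat_r; [left; apply Rinv_0_lt_compat; lra|].
    unfold Rminus. eapply Rle_trans; [apply Rabs_triang|].
    rewrite Rabs_Ropp, !Rabs_mult, (Rabs_pos_eq (h a)), (Rabs_pos_eq (h b)) by lra.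
    pose proof (Rabs_cos_le_1 (M * a)). pose proof (Rabs_cos_le_1 (M * b)). nra. }
  eapply Rle_trans; [apply Rabs_triang|].
  replace (2 * h b / M) with ((h b + h a) / M + (h b - h a) / M) by (field; lra). lra.
Qed.

Lemma sqr_mul_cos_le_sqr_sin x : 0 < x <= PI / 2 -> x * x * cos x <= sin x * sin x.
Proof.
  intros [H1 H2]. pose proof PI_4.
  assert (Hs : x - x ^ 3 / 6 <= sin x).
  { destruct (pre_sin_bound x 0 ltac:(lra) ltac:(lra)) as [Hl _].
    unfold sin_approx, sin_term in Hl. simpl in Hl. lra. }
  assert (Hc : cos x <= 1 - x ^ 2 / 2 + x ^ 4 / 24).
  { destruct (cos_bound x 0 ltac:(lra) H2) as [_ Hu].
    unfold cos_approx, cos_term in Hu. simpl in Hu. lra. }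
  assert (Hx2 : x * x <= 4) by nra.
  assert (Hp : 0 <= x - x ^ 3 / 6) by (simpl; nra).
  assert (x * x * cos x <= x * x * (1 - x ^ 2 / 2 + x ^ 4 / 24)) by nra.
  assert (x * x * (1 - x ^ 2 / 2 + x ^ 4 / 24) <= (x - x ^ 3 / 6) * (x - x ^ 3 / 6))
    by (simpl; nra).
  nra.
Qed.

Definition inv_sin_sub_inv (x : R) : R := 1 / sin x - 1 / x.

Lemma RInt_sin_mul_inv_sin_sub_inv_le M eps : 0 < M -> 0 < eps <= PI / 2 ->
  Rabs (RInt (fun x => sin (M * x) * inv_sin_sub_inv x) eps (PI / 2)) <= 2 / M.
Proof.
  intros HM He.
  assert (Hsin : forall x, eps <= x <= PI / 2 -> 0 < sin x).
  { intros x Hx. apply sin_gt_0; pose proof PI2_Rlt_PI; lra. }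
  replace (2 / M) with (2 * 1 / M) by (field; lra).
  apply Rle_trans with (2 * inv_sin_sub_inv (PI / 2) / M).
  2: { unfold inv_sin_sub_inv. rewrite sin_PI2. pose proof PI2_1.
       assert (0 < 1 / (PI / 2)) by (apply Rdiv_lt_0_compat; lra).
       apply Rmult_le_compat_r; [left; apply Rinv_0_lt_compat|]; lra. }
  apply Rabs_RInt_sin_mul_le with (dh := fun x => - cos x / (sin x * sin x) + 1 / (x * x));
    auto; try lra.
  - intros x Hx. specialize (Hsin x Hx). unfold inv_sin_sub_inv.
    auto_derive; [solve_neq0|]. field. lra.
  - intros x Hx. specialize (Hsin x Hx).
    apply (ex_derive_continuous (V := R_NormedModule)). auto_derive. solve_neq0.
  - intros x Hx. specialize (Hsin x Hx). pose proof (sqr_mul_cos_le_sqr_sin x ltac:(lra)).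
    replace (- cos x / (sin x * sin x) + 1 / (x * x))
      with ((sin x * sin x - x * x * cos x) / ((sin x * sin x) * (x * x))) by (field; lra).
    apply Rdiv_le_0_compat; [lra|apply Rmult_lt_0_compat; nra].
  - specialize (Hsin eps ltac:(lra)). pose proof (sin_lt_x eps ltac:(lra)).
    unfold inv_sin_sub_inv, Rdiv. rewrite !Rmult_1_l.
    assert (/ eps <= / sin eps) by (apply Rinv_le_contravar; lra). lra.
Qed.

Lemma Ksinc_sub_dirichlet_kernel n x : 0 < x -> 0 < sin x ->
  Ksinc (2 * INR n + 1) x - dirichlet_kernel n x
  = - (sin ((2 * INR n + 1) * x) * inv_sin_sub_inv x).
Proof.
  intros Hx Hs. pose proof (sin_mul_dirichlet_kernel n x) as HD.
  rewrite KsincE by lra.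
  replace (dirichlet_kernel n x) with (sin ((2 * INR n + 1) * x) / sin x)
    by (rewrite <- HD; field; lra).
  unfold inv_sin_sub_inv. field. split; lra.
Qed.

Lemma Rabs_Ksinc_sub_dirichlet_kernel_le n x :
  Rabs (Ksinc (2 * INR n + 1) x - dirichlet_kernel n x) <= 2 * (2 * INR n + 1).
Proof.
  pose proof (pos_INR n).
  unfold Rminus. eapply Rle_trans; [apply Rabs_triang|]. rewrite Rabs_Ropp.
  pose proof (Ksinc_le (2 * INR n + 1) x) as HK. pose proof (Rabs_dirichlet_kernel_le n x).
  rewrite (Rabs_pos_eq (2 * INR n + 1)) in HK by lra. lra.
Qed.

Lemma RInt_sinc_odd_half_pi n : let M := 2 * INR n + 1 in
  Rabs (RInt (Ksinc 1) 0 (M * (PI / 2)) - PI / 2) <= 4 / M.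
Proof.
  intros M. assert (HM : 1 <= M) by (unfold M; pose proof (pos_INR n); lra).
  pose proof PI2_1.
  rewrite <- RInt_Ksinc_scale by lra.
  (* split [0, pi/2] at eps = 1 / M^2: crude bound near 0, Abel's bound away from 0 *)
  set (eps := 1 / (M * M)).
  assert (He : 0 < eps <= PI / 2).
  { unfold eps. split; [apply Rdiv_lt_0_compat; nra|].
    apply Rle_trans with 1; [|lra]. unfold Rdiv. rewrite Rmult_1_l, <- Rinv_1.
    apply Rinv_le_contravar; nra. }
  assert (exKD : forall a b, ex_RInt (fun x => Ksinc M x - dirichlet_kernel n x) a b).
  { intros. apply (ex_RInt_minus (V := R_NormedModule)); apply ex_RInt_cont;
      [apply continuous_Ksinc|apply continuous_dirichlet_kernel]. }
  replace (RInt (Ksinc M) 0 (PI / 2) - PI / 2)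
    with (RInt (fun x => Ksinc M x - dirichlet_kernel n x) 0 (PI / 2))
    by (rewrite RInt_minusR, RInt_dirichlet_kernel by (apply ex_RInt_cont;
          apply continuous_Ksinc || apply continuous_dirichlet_kernel); reflexivity).
  rewrite <- (RInt_ChaslesR _ 0 eps (PI / 2)) by auto.
  assert (Hnear : Rabs (RInt (fun x => Ksinc M x - dirichlet_kernel n x) 0 eps)
                  <= (eps - 0) * (2 * M)).
  { apply abs_RInt_le_const; auto; [lra|]. intros x _.
    apply Rabs_Ksinc_sub_dirichlet_kernel_le. }
  assert (Hfar : (RInt (fun x => Ksinc M x - dirichlet_kernel n x) eps (PI / 2) : R)
                 = -1 * RInt (fun x => sin (M * x) * inv_sin_sub_inv x) eps (PI / 2)).
  { rewrite <- RInt_scalR.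
    2: { apply ex_RInt_cont_on. intros x Hx. rewrite Rmin_left, Rmax_right in Hx by lra.
         assert (sin x <> 0) by (apply Rgt_not_eq, sin_gt_0; lra).
         apply (ex_derive_continuous (V := R_NormedModule)). unfold inv_sin_sub_inv.
         auto_derive. repeat split; auto; lra. }
    apply RInt_extR. intros x Hx. rewrite Rmin_left, Rmax_right in Hx by lra.
    unfold M. rewrite Ksinc_sub_dirichlet_kernel; [ring|lra|apply sin_gt_0; lra]. }
  rewrite Hfar.
  pose proof (RInt_sin_mul_inv_sin_sub_inv_le M eps ltac:(lra) He).
  eapply Rle_trans; [apply Rabs_triang|]. rewrite Rabs_mult, Rabs_m1.
  replace (4 / M) with ((eps - 0) * (2 * M) + 2 / M) by (unfold eps; field; lra).
  lra.
Qed.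

Lemma RInt_sinc_approx B : 0 < B -> Rabs (RInt (Ksinc 1) 0 B - PI / 2) <= 6 / B.
Proof.
  intros HB. destruct (INR_archimed 1 B ltac:(lra)) as [n Hn]. rewrite Rmult_1_r in Hn.
  pose proof (RInt_sinc_odd_half_pi n) as Hodd. simpl in Hodd.
  set (M := 2 * INR n + 1) in *.
  pose proof PI2_1.
  assert (HBM : B <= M) by (unfold M; pose proof (pos_INR n); lra).
  assert (HMB : B <= M * (PI / 2)) by nra.
  pose proof (RInt_sinc_tail_le B (M * (PI / 2)) ltac:(lra)) as Htail.
  rewrite <- (RInt_ChaslesR _ 0 B (M * (PI / 2))) in Hodd
    by (apply ex_RInt_cont, continuous_Ksinc).
  assert (4 / M <= 4 / B).
  { unfold Rdiv. apply Rmult_le_compat_l; [lra|]. apply Rinv_le_contravar; lra. }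
  replace (RInt (Ksinc 1) 0 B - PI / 2) with
    ((RInt (Ksinc 1) 0 B + RInt (Ksinc 1) B (M * (PI / 2)) - PI / 2)
     - RInt (Ksinc 1) B (M * (PI / 2))) by lra.
  unfold Rminus at 1. eapply Rle_trans; [apply Rabs_triang|]. rewrite Rabs_Ropp.
  replace (6 / B) with (4 / B + 2 / B) by (field; lra). lra.
Qed.

Lemma is_lim_p_infty_of_bound (g : R -> R) (L : R) B0 C : 0 < B0 -> 0 <= C ->
  (forall B, B0 <= B -> Rabs (g B - L) <= C / B) -> is_lim g p_infty L.
Proof.
  intros HB0 HC H. apply is_lim_spec. intros eps.
  exists (Rmax B0 ((C + 1) / eps)). intros B HB.
  assert (H1 : B0 <= B) by (pose proof (Rmax_l B0 ((C + 1) / eps)); lra).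
  assert (H2 : (C + 1) / eps <= B) by (pose proof (Rmax_r B0 ((C + 1) / eps)); lra).
  pose proof (cond_pos eps).
  eapply Rle_lt_trans; [apply H; auto|].
  apply (Rmult_lt_reg_r B); [lra|]. unfold Rdiv. rewrite Rmult_assoc, Rinv_l, Rmult_1_r by lra.
  apply (Rmult_le_compat_r eps) in H2; [|lra].
  unfold Rdiv in H2. rewrite Rmult_assoc, Rinv_l, Rmult_1_r in H2 by lra. lra.
Qed.

Lemma is_lim_p_infty_approx (g h : R -> R) (L : R) B0 C : 0 < B0 -> 0 <= C ->
  is_lim h p_infty L -> (forall B, B0 <= B -> Rabs (g B - h B) <= C / B) ->
  is_lim g p_infty L.
Proof.
  intros HB0 HC Hh Hgh.
  assert (Hdiff : is_lim (fun B => g B - h B) p_infty 0).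
  { apply (is_lim_p_infty_of_bound _ _ B0 C); auto. intros B HB. rewrite Rminus_0_r. auto. }
  rewrite <- (Rplus_0_l L).
  apply (is_lim_ext (fun B => (g B - h B) + h B)); [intros; ring|].
  now apply is_lim_plus'.
Qed.

Lemma is_lim_RInt_Ksinc nu : is_lim (fun B => RInt (Ksinc nu) 0 B) p_infty (PI / 2 * sign nu).
Proof.
  assert (Hpos : forall nu, 0 < nu -> is_lim (fun B => RInt (Ksinc nu) 0 B) p_infty (PI / 2)).
  { intros mu Hmu. apply (is_lim_p_infty_of_bound _ _ 1 (6 / mu)); [lra|..].
    - left. apply Rdiv_lt_0_compat; lra.
    - intros B HB. rewrite RInt_Ksinc_scale by lra.
      eapply Rle_trans; [apply RInt_sinc_approx; nra|].
      right. field. split; lra. }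
  destruct (Rtotal_order nu 0) as [Hn|[->|Hp]].
  - rewrite sign_eq_m1 by auto.
    assert (H := is_lim_opp _ _ _ (Hpos (- nu) ltac:(lra))). simpl in H.
    replace (PI / 2 * -1) with (- (PI / 2)) by ring.
    apply (is_lim_ext (fun y => - RInt (Ksinc (- nu)) 0 y)); [intros B|exact H].
    replace (- RInt (Ksinc (- nu)) 0 B) with (-1 * RInt (Ksinc (- nu)) 0 B) by lra.
    rewrite <- RInt_scalR by apply ex_RInt_cont, continuous_Ksinc.
    apply RInt_extR. intros x _. rewrite Ksinc_oppk. ring.
  - rewrite sign_0, Rmult_0_r.
    apply (is_lim_ext (fun _ => 0)); [|apply is_lim_const]. intros B.
    rewrite (RInt_extR _ (fun _ => 0)) by (intros; apply Ksinc_0k).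
    rewrite RInt_const. unfold scal; simpl; unfold mult; simpl. ring.
  - rewrite sign_eq_1, Rmult_1_r by auto. now apply Hpos.
Qed.

Lemma cos_sin_sin_product_to_sum A C be ph :
  (cos (C + ph) * sin (A + be) + cos (ph - C) * sin (be - A)) * sin A =
  1 / 2 * sin (be + ph) * (sin (2 * A + C) - sin C)
  + 1 / 2 * sin (be - ph) * (sin (2 * A - C) + sin C).
Proof.
  assert (E1 : sin (2 * A + C) - sin C = 2 * sin A * cos (A + C)).
  { rewrite sin_plus, cos_plus, sin_2a, cos_2a_sin. ring. }
  assert (E2 : sin (2 * A - C) + sin C = 2 * sin A * cos (A - C)).
  { rewrite sin_minus, cos_minus, sin_2a, cos_2a_sin. ring. }
  rewrite E1, E2, !sin_plus, !cos_plus, !sin_minus, !cos_minus. field.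
Qed.

Definition cos_sin_sinc (xi ka ph d u : R) : R :=
  cos (xi * u + ph) * sin (ka * (u + d)) * Ksinc ka u.

Lemma continuous_cos_sin_sinc xi ka ph d x : continuous (cos_sin_sinc xi ka ph d) x.
Proof.
  unfold cos_sin_sinc. apply continuous_mulR; [apply continuous_mulR|apply continuous_Ksinc];
    apply (ex_derive_continuous (V := R_NormedModule)); auto_derive; auto.
Qed.

Lemma cos_sin_sinc_even_part xi ka ph d u :
  cos_sin_sinc xi ka ph d u + cos_sin_sinc xi ka ph d (- u) =
  1 / 2 * sin (ka * d + ph) * (Ksinc (2 * ka + xi) u + Ksinc (- xi) u)
  + 1 / 2 * sin (ka * d - ph) * (Ksinc (2 * ka - xi) u + Ksinc xi u).
Proof.
  unfold cos_sin_sinc. rewrite Ksinc_oppx.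
  destruct (Req_EM_T u 0) as [->|Hu].
  - rewrite !Ksinc_0, Ropp_0, !Rmult_0_r, !Rplus_0_l, sin_plus, sin_minus. field.
  - rewrite !KsincE by auto.
    set (A := ka * u). set (C := xi * u). set (be := ka * d).
    replace (xi * - u + ph) with (ph - C) by (unfold C; ring).
    replace (xi * u + ph) with (C + ph) by (unfold C; ring).
    replace (ka * (u + d)) with (A + be) by (unfold A, be; ring).
    replace (ka * (- u + d)) with (be - A) by (unfold A, be; ring).
    replace ((2 * ka + xi) * u) with (2 * A + C) by (unfold A, C; ring).
    replace ((2 * ka - xi) * u) with (2 * A - C) by (unfold A, C; ring).
    replace (- xi * u) with (- C) by (unfold C; ring).
    rewrite sin_neg.
    transitivity ((cos (C + ph) * sin (A + be) + cos (ph - C) * sin (be - A)) * sin A / u);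
      [field; auto|].
    rewrite cos_sin_sin_product_to_sum. field. auto.
Qed.

Lemma is_lim_RInt_cos_sin_sinc xi ka ph d : 0 < xi -> 0 < ka ->
  is_lim (fun B => RInt (cos_sin_sinc xi ka ph d) (- B) B) p_infty
    (PI / 4 * (1 + sign (2 * ka - xi)) * sin (ka * d - ph)).
Proof.
  intros Hxi Hka.
  assert (ek : forall nu a b, ex_RInt (Ksinc nu) a b)
    by (intros; apply ex_RInt_cont, continuous_Ksinc).
  assert (ek2 : forall nu mu a b, ex_RInt (fun u => Ksinc nu u + Ksinc mu u) a b)
    by (intros; apply (ex_RInt_plus (V := R_NormedModule)); auto).
  apply (is_lim_ext (fun B =>
     1 / 2 * sin (ka * d + ph) * (RInt (Ksinc (2 * ka + xi)) 0 B + RInt (Ksinc (- xi)) 0 B)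
   + 1 / 2 * sin (ka * d - ph) * (RInt (Ksinc (2 * ka - xi)) 0 B + RInt (Ksinc xi) 0 B))).
  { intros B. rewrite RInt_symmetricR by apply continuous_cos_sin_sinc.
    rewrite (RInt_extR _ _ _ _ (fun u _ => cos_sin_sinc_even_part xi ka ph d u)).
    rewrite RInt_plusR, !RInt_scalR, !RInt_plusR; auto;
      apply (ex_RInt_scal (V := R_NormedModule) (fun u => Ksinc _ u + Ksinc _ u)); auto. }
  replace (PI / 4 * (1 + sign (2 * ka - xi)) * sin (ka * d - ph)) with
    (1 / 2 * sin (ka * d + ph) * (PI / 2 * sign (2 * ka + xi) + PI / 2 * sign (- xi))
   + 1 / 2 * sin (ka * d - ph) * (PI / 2 * sign (2 * ka - xi) + PI / 2 * sign xi)).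
  - apply is_lim_plus'; apply (is_lim_scal_l _ _ _ (Finite _)), is_lim_plus';
      apply is_lim_RInt_Ksinc.
  - rewrite (sign_eq_1 (2 * ka + xi)), (sign_eq_m1 (- xi)), (sign_eq_1 xi) by lra. field.
Qed.

Definition cos_sinc_sinc (xi ka ph d u : R) : R :=
  cos (xi * u + ph) * Ksinc ka u * Ksinc ka (u + d).

Lemma continuous_cos_sinc_sinc xi ka ph d x : continuous (cos_sinc_sinc xi ka ph d) x.
Proof.
  unfold cos_sinc_sinc.
  apply continuous_mulR; [apply continuous_mulR|].
  - apply (ex_derive_continuous (V := R_NormedModule)). auto_derive. auto.
  - apply continuous_Ksinc.
  - apply continuous_shiftR with (f := Ksinc ka). apply continuous_Ksinc.
Qed.

Lemma cos_sinc_sinc_partial_fractions xi ka ph d u : d <> 0 ->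
  cos_sinc_sinc xi ka ph d u
  = / d * (cos_sin_sinc xi ka ph d u - cos_sin_sinc xi ka (ph - xi * d) (- d) (u + d)).
Proof.
  intros Hd. unfold cos_sinc_sinc, cos_sin_sinc.
  replace (ka * (u + d + - d)) with (ka * u) by ring.
  replace (xi * (u + d) + (ph - xi * d)) with (xi * u + ph) by ring.
  destruct (Req_EM_T u 0) as [->|Hu].
  - rewrite !Rmult_0_r, sin_0, Ksinc_0, !Rplus_0_l, KsincE by auto. field. auto.
  - destruct (Req_EM_T (u + d) 0) as [Hud|Hud].
    + replace u with (- d) in * by lra.
      rewrite Hud, Ksinc_0, Rmult_0_r, sin_0, KsincE by auto.
      replace (ka * - d) with (- (ka * d)) by ring. rewrite sin_neg. field. auto.
    + rewrite !KsincE by auto. field. auto.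
Qed.

Lemma Rabs_cos_sin_sinc_le xi ka ph d v : v <> 0 -> Rabs (cos_sin_sinc xi ka ph d v) <= / Rabs v.
Proof.
  intros Hv. unfold cos_sin_sinc. rewrite !Rabs_mult.
  pose proof (Rabs_cos_le_1 (xi * v + ph)). pose proof (Rabs_sin_le_1 (ka * (v + d))).
  pose proof (Ksinc_le_inv ka v Hv).
  pose proof (Rabs_pos (cos (xi * v + ph))). pose proof (Rabs_pos (sin (ka * (v + d)))).
  pose proof (Rabs_pos (Ksinc ka v)).
  assert (Rabs (cos (xi * v + ph)) * Rabs (sin (ka * (v + d))) <= 1) by nra.
  nra.
Qed.

Lemma Rabs_RInt_cos_sin_sinc_far_le xi ka ph d' c d B : 2 * Rabs d <= B -> 0 < B -> Rabs c = B ->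
  Rabs (RInt (cos_sin_sinc xi ka ph d') c (c + d)) <= Rabs d * (2 / B).
Proof.
  intros H1 H2 H3. replace (Rabs d) with (Rabs (c + d - c)) at 1 by (f_equal; ring).
  apply Rabs_RInt_le_const; [apply continuous_cos_sin_sinc|].
  intros x Hx.
  assert (Hxc : Rabs (x - c) <= Rabs d).
  { unfold Rmin, Rmax in Hx. pose proof (Rle_abs d). pose proof (Rle_abs (- d)).
    rewrite Rabs_Ropp in *. destruct (Rle_dec c (c + d)); apply Rabs_le; lra. }
  assert (Hx' : B / 2 <= Rabs x).
  { pose proof (Rabs_triang_inv c (c - x)) as T. replace (c - (c - x)) with x in T by ring.
    rewrite <- Rabs_Ropp in Hxc. replace (- (x - c)) with (c - x) in Hxc by ring. lra. }
  assert (x <> 0) by (intros ->; rewrite Rabs_R0 in Hx'; lra).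
  eapply Rle_trans; [apply Rabs_cos_sin_sinc_le; auto|].
  replace (2 / B) with (/ (B / 2)) by (field; lra). apply Rinv_le_contravar; lra.
Qed.

Lemma is_lim_RInt_cos_sinc_sinc xi ka ph d : 0 < xi -> 0 < ka -> d <> 0 ->
  is_lim (fun B => RInt (cos_sinc_sinc xi ka ph d) (- B) B) p_infty
    (/ d * (PI / 4 * (1 + sign (2 * ka - xi)) * sin (ka * d - ph)
          - PI / 4 * (1 + sign (2 * ka - xi)) * sin (ka * (- d) - (ph - xi * d)))).
Proof.
  intros Hxi Hka Hd.
  set (P1 := cos_sin_sinc xi ka ph d). set (P2 := cos_sin_sinc xi ka (ph - xi * d) (- d)).
  assert (C1 : forall x, continuous P1 x) by (intros; apply continuous_cos_sin_sinc).
  assert (C2 : forall x, continuous P2 x) by (intros; apply continuous_cos_sin_sinc).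
  assert (ex2 : forall a b, ex_RInt P2 a b) by (intros; now apply ex_RInt_cont).
  pose proof (Rabs_pos d) as Hdp. assert (Had : 0 < Rabs d) by now apply Rabs_pos_lt.
  apply (is_lim_p_infty_approx _ (fun B => / d * (RInt P1 (- B) B - RInt P2 (- B) B))
           _ (2 * Rabs d + 1) 4); [lra|lra|..].
  { apply (is_lim_scal_l _ _ _ (Finite _)), is_lim_minus'; apply is_lim_RInt_cos_sin_sinc; auto. }
  (* shifting the second integral by d costs two integrals over intervals of length |d|
     at distance about B from the origin *)
  intros B HB. assert (HB0 : 0 < B) by lra.
  rewrite (RInt_extR _ (fun u => / d * (P1 u - P2 (u + d))))
    by (intros; now apply cos_sinc_sinc_partial_fractions).
  assert (C3 : forall x, continuous (fun u => P1 u - P2 (u + d)) x).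
  { intros x. apply (continuous_minus (V := R_NormedModule) P1 (fun u => P2 (u + d))); auto.
    now apply continuous_shiftR. }
  rewrite RInt_scalR, RInt_minusR, RInt_shiftR
    by (auto; apply ex_RInt_cont; auto; intros; now apply continuous_shiftR).
  rewrite <- (RInt_ChaslesR P2 (- B + d) (- B) (B + d)), <- (RInt_ChaslesR P2 (- B) B (B + d)),
    (RInt_swapR P2 (- B) (- B + d)) by auto.
  assert (H1 : Rabs (RInt P2 (- B) (- B + d)) <= Rabs d * (2 / B)).
  { apply Rabs_RInt_cos_sin_sinc_far_le; try lra. rewrite Rabs_Ropp, Rabs_pos_eq; lra. }
  assert (H2 : Rabs (RInt P2 B (B + d)) <= Rabs d * (2 / B)).
  { apply Rabs_RInt_cos_sin_sinc_far_le; try lra. rewrite Rabs_pos_eq; lra. }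
  replace (/ d * (RInt P1 (- B) B - (- RInt P2 (- B) (- B + d)
             + (RInt P2 (- B) B + RInt P2 B (B + d)))) - / d * (RInt P1 (- B) B - RInt P2 (- B) B))
    with (/ d * (RInt P2 (- B) (- B + d) - RInt P2 B (B + d))) by (field; auto).
  rewrite Rabs_mult, Rabs_inv.
  assert (Rabs (RInt P2 (- B) (- B + d) - RInt P2 B (B + d)) <= 2 * (Rabs d * (2 / B))).
  { unfold Rminus. eapply Rle_trans; [apply Rabs_triang|]. rewrite Rabs_Ropp. lra. }
  apply Rle_trans with (/ Rabs d * (2 * (Rabs d * (2 / B)))).
  - apply Rmult_le_compat_l; auto. left; now apply Rinv_0_lt_compat.
  - right. field. split; lra.
Qed.

Lemma Rabs_cos_sinc_sinc_le xi ka ph d u : 2 * Rabs d + 1 <= Rabs u ->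
  Rabs (cos_sinc_sinc xi ka ph d u) <= 2 / (u * u).
Proof.
  intros Hu. pose proof (Rabs_pos d).
  assert (Hu0 : u <> 0) by (intros ->; rewrite Rabs_R0 in Hu; lra).
  assert (Hud : Rabs u / 2 <= Rabs (u + d)).
  { pose proof (Rabs_triang_inv u (- d)) as T. rewrite Rabs_Ropp in T.
    replace (u - - d) with (u + d) in T by ring. lra. }
  assert (Hud0 : u + d <> 0) by (intros E; rewrite E, Rabs_R0 in Hud; lra).
  unfold cos_sinc_sinc. rewrite !Rabs_mult.
  pose proof (Rabs_cos_le_1 (xi * u + ph)).
  pose proof (Ksinc_le_inv ka u Hu0). pose proof (Ksinc_le_inv ka (u + d) Hud0).
  assert (/ Rabs (u + d) <= 2 / Rabs u).
  { replace (2 / Rabs u) with (/ (Rabs u / 2)) by (field; lra). apply Rinv_le_contravar; lra. }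
  pose proof (Rabs_pos (cos (xi * u + ph))). pose proof (Rabs_pos (Ksinc ka u)).
  pose proof (Rabs_pos (Ksinc ka (u + d))).
  assert (0 < / Rabs u) by (apply Rinv_0_lt_compat; lra).
  apply Rle_trans with (1 * / Rabs u * (2 / Rabs u)).
  - apply Rmult_le_compat; [apply Rmult_le_pos; lra|lra| |lra].
    apply Rmult_le_compat; lra.
  - assert (Eu : u * u = Rabs u * Rabs u)
      by (rewrite <- Rabs_mult; symmetry; apply Rabs_pos_eq; nra).
    rewrite Eu. right. field. lra.
Qed.

Definition improper_RInt (f : R -> R) (L : R) : Prop :=
  forall eps, 0 < eps -> exists M, forall a b, a <= - M -> M <= b ->
    Rabs (RInt f a b - L) < eps.

Section InverseSquareDecay.

Variables (f : R -> R) (R0 C : R).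
Hypothesis f_cont : forall x, continuous f x.
Hypothesis R0_pos : 0 < R0.
Hypothesis f_decay : forall u, R0 <= Rabs u -> Rabs (f u) <= C / (u * u).

Let C_ge0 : 0 <= C.
Proof.
  specialize (f_decay R0). rewrite Rabs_pos_eq in f_decay by lra.
  pose proof (Rabs_pos (f R0)). assert (0 < R0 * R0) by nra.
  apply Rmult_le_reg_r with (/ (R0 * R0)); [now apply Rinv_0_lt_compat|].
  rewrite Rmult_0_l. specialize (f_decay (Rle_refl _)). unfold Rdiv in f_decay. lra.
Qed.

Lemma Rabs_RInt_tail_r r b : R0 <= r -> r <= b -> Rabs (RInt f r b) <= C / r.
Proof.
  intros Hr Hrb.
  assert (I := is_RInt_inv_sqr C r b ltac:(nra)).
  eapply Rle_trans.
  - apply Rabs_RInt_le with (g := fun u => C / (u * u)); auto;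
      [now apply ex_RInt_cont|eexists; eauto|].
    intros x Hx. apply f_decay. rewrite Rabs_pos_eq; lra.
  - rewrite (is_RInt_unique _ _ _ _ I).
    assert (0 <= C / b) by (apply Rdiv_le_0_compat; lra). lra.
Qed.

Lemma Rabs_RInt_tail_l r a : R0 <= r -> a <= - r -> Rabs (RInt f a (- r)) <= C / r.
Proof.
  intros Hr Har.
  assert (I := is_RInt_inv_sqr C a (- r) ltac:(nra)).
  eapply Rle_trans.
  - apply Rabs_RInt_le with (g := fun u => C / (u * u)); auto;
      [now apply ex_RInt_cont|eexists; eauto|].
    intros x Hx. apply f_decay. rewrite Rabs_left; lra.
  - rewrite (is_RInt_unique _ _ _ _ I).
    assert (C / a <= 0).
    { unfold Rdiv. apply Rmult_le_0_l; [lra|]. left. apply Rinv_lt_0_compat. lra. }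
    replace (C / - r) with (- (C / r)) by (field; lra). lra.
Qed.

Lemma improper_RInt_of_symmetric (L : R) :
  is_lim (fun B => RInt f (- B) B) p_infty L -> improper_RInt f L.
Proof.
  intros HL eps He. apply is_lim_spec in HL.
  destruct (HL (mkposreal (eps / 2) ltac:(lra))) as [M1 HM1]. simpl in HM1.
  set (M := Rmax (Rmax (M1 + 1) R0) (4 * C / eps)).
  assert (HM1' : M1 + 1 <= M) by (unfold M; eapply Rle_trans; [apply Rmax_l|apply Rmax_l]).
  assert (HR0 : R0 <= M) by (unfold M; eapply Rle_trans; [apply Rmax_r|apply Rmax_l]).
  assert (HMC : 4 * C / eps <= M) by (unfold M; apply Rmax_r).
  exists M. intros a b Ha Hb.
  assert (ex : forall x y, ex_RInt f x y) by (intros; now apply ex_RInt_cont).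
  assert (Hr : forall r, M <= r -> C / r <= eps / 4).
  { intros r Hr. pose proof C_ge0. assert (0 <= 4 * C / eps) by (apply Rdiv_le_0_compat; lra).
    apply (Rmult_le_reg_r r); [lra|]. unfold Rdiv. rewrite Rmult_assoc, Rinv_l, Rmult_1_r by lra.
    apply (Rmult_le_compat_r eps) in HMC; [|lra]. unfold Rdiv in HMC.
    rewrite Rmult_assoc, Rinv_l, Rmult_1_r in HMC by lra. nra. }
  destruct (Rle_dec b (- a)) as [Hba|Hba].
  - rewrite <- (RInt_ChaslesR _ a (- b) b) by auto.
    pose proof (Rabs_RInt_tail_l b a ltac:(lra) ltac:(lra)).
    specialize (HM1 b ltac:(lra)). specialize (Hr b Hb).
    replace (RInt f a (- b) + RInt f (- b) b - L)
      with (RInt f a (- b) + (RInt f (- b) b - L)) by ring.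
    eapply Rle_lt_trans; [apply Rabs_triang|]. lra.
  - rewrite <- (RInt_ChaslesR _ a (- a) b) by auto.
    pose proof (Rabs_RInt_tail_r (- a) b ltac:(lra) ltac:(lra)).
    specialize (HM1 (- a) ltac:(lra)). specialize (Hr (- a) ltac:(lra)).
    rewrite Ropp_involutive in HM1.
    replace (RInt f a (- a) + RInt f (- a) b - L)
      with ((RInt f a (- a) - L) + RInt f (- a) b) by ring.
    eapply Rle_lt_trans; [apply Rabs_triang|]. lra.
Qed.

End InverseSquareDecay.

Lemma improper_integral_of_improper_RInt (f : R -> R) L :
  (forall x, continuous f x) -> improper_RInt f L -> improper_integral f L.
Proof.
  intros Hc H. split.
  - intros a b. constructor. now apply ex_RInt_Reals_0, ex_RInt_cont.
  - intros eps He. destruct (H eps He) as [M HM]. exists M. intros a b Ha Hb pr.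
    rewrite <- RInt_Reals. now apply HM.
Qed.

Lemma improper_RInt_ext (f g : R -> R) L :
  (forall x, f x = g x) -> improper_RInt f L -> improper_RInt g L.
Proof.
  intros Hfg H eps He. destruct (H eps He) as [M HM]. exists M. intros a b Ha Hb.
  rewrite <- (RInt_extR f) by auto. now apply HM.
Qed.

Lemma improper_RInt_scal (f : R -> R) K L : (forall x, continuous f x) ->
  improper_RInt f L -> improper_RInt (fun q => K * f q) (K * L).
Proof.
  intros Hc H eps He.
  destruct (H (eps / (Rabs K + 1))) as [M HM].
  { apply Rdiv_lt_0_compat; [lra|]. pose proof (Rabs_pos K). lra. }
  exists M. intros a b Ha Hb. specialize (HM a b Ha Hb).
  rewrite RInt_scalR by now apply ex_RInt_cont.
  replace (K * RInt f a b - K * L) with (K * (RInt f a b - L)) by ring.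
  rewrite Rabs_mult. pose proof (Rabs_pos K). pose proof (Rabs_pos (RInt f a b - L)).
  apply Rle_lt_trans with ((Rabs K + 1) * Rabs (RInt f a b - L)); [nra|].
  apply (Rmult_lt_compat_l (Rabs K + 1)) in HM; [|lra].
  replace ((Rabs K + 1) * (eps / (Rabs K + 1))) with eps in HM by (field; lra). lra.
Qed.

Lemma improper_RInt_shift (f : R -> R) c L : (forall x, continuous f x) ->
  improper_RInt f L -> improper_RInt (fun q => f (q + c)) L.
Proof.
  intros Hc H eps He. destruct (H eps He) as [M HM].
  exists (M + Rabs c). intros a b Ha Hb.
  rewrite RInt_shiftR by auto.
  pose proof (Rle_abs c). pose proof (Rle_abs (- c)). rewrite Rabs_Ropp in *.
  apply HM; lra.
Qed.

Definition sinc_product_integral (xi ka c1 c2 th : R) : R :=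
  PI / 4 * (1 + sign (2 * ka - xi)) / (c1 - c2) *
  (sin (ka * (c1 - c2) - xi * c1 - th) - sin (- (ka * (c1 - c2)) - xi * c2 - th)).

Lemma improper_RInt_cos_sinc_sinc xi ka c1 c2 th : 0 < xi -> 0 < ka -> c1 <> c2 ->
  improper_RInt (fun q => cos (xi * q + th) * Ksinc ka (q - c1) * Ksinc ka (q - c2))
    (sinc_product_integral xi ka c1 c2 th).
Proof.
  intros Hxi Hka Hc. assert (Hd : c1 - c2 <> 0) by lra.
  set (ph := xi * c1 + th).
  apply (improper_RInt_ext (fun q => cos_sinc_sinc xi ka ph (c1 - c2) (q + - c1))).
  { intros q. unfold cos_sinc_sinc, ph.
    replace (xi * (q + - c1) + (xi * c1 + th)) with (xi * q + th) by ring.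
    replace (q + - c1 + (c1 - c2)) with (q - c2) by ring. reflexivity. }
  apply improper_RInt_shift; [apply continuous_cos_sinc_sinc|].
  replace (sinc_product_integral xi ka c1 c2 th) with
    (/ (c1 - c2) * (PI / 4 * (1 + sign (2 * ka - xi)) * sin (ka * (c1 - c2) - ph)
     - PI / 4 * (1 + sign (2 * ka - xi)) * sin (ka * - (c1 - c2) - (ph - xi * (c1 - c2))))).
  - apply (improper_RInt_of_symmetric _ (2 * Rabs (c1 - c2) + 1) 2).
    + apply continuous_cos_sinc_sinc.
    + pose proof (Rabs_pos (c1 - c2)). lra.
    + apply Rabs_cos_sinc_sinc_le.
    + now apply is_lim_RInt_cos_sinc_sinc.
  - unfold sinc_product_integral, ph.
    replace (ka * (c1 - c2) - (xi * c1 + th)) with (ka * (c1 - c2) - xi * c1 - th) by ring.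
    replace (ka * - (c1 - c2) - (xi * c1 + th - xi * (c1 - c2)))
      with (- (ka * (c1 - c2)) - xi * c2 - th) by ring.
    field. auto.
Qed.

(* Theta only meets V, which vanishes where Theta jumps, so Theta may be
   replaced by the symmetric step (1 + sign x) / 2 produced by the Dirichlet integrals. *)
Lemma Heaviside_mul_eq_sign x X : (x = 0 -> X = 0) -> Heaviside x * X = (1 + sign x) / 2 * X.
Proof.
  intros H0. unfold Heaviside.
  destruct (Rtotal_order x 0) as [Hx|[Hx|Hx]].
  - rewrite sign_eq_m1 by auto. destruct (Rle_dec 0 x); [lra|]. field.
  - rewrite (H0 Hx). ring.
  - rewrite sign_eq_1 by auto. destruct (Rle_dec 0 x); [|lra]. field.
Qed.

Section Decoherence.

Variables (alpha g0 lam kappa0 omega n dtau b b' : R).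
Hypotheses (alpha_pos : 0 < alpha) (g0_pos : 0 < g0) (lam_pos : 0 < lam)
  (kappa0_pos : 0 < kappa0) (omega_pos : 0 < omega) (n_pos : 0 < n) (dtau_pos : 0 < dtau)
  (b_neq : b <> b').

Let xi := alpha * g0 * dtau * omega * n.
Let c1 := ctr alpha g0 lam dtau b.
Let c2 := ctr alpha g0 lam dtau b'.

Let xi_pos : 0 < xi.
Proof. unfold xi. repeat apply Rmult_lt_0_compat; lra. Qed.

Let c1_sub_c2 : c1 - c2 = 2 * lam * (b - b') / (alpha * g0 * dtau).
Proof. unfold c1, c2, ctr. field. repeat split; lra. Qed.

Let c1_neq_c2 : c1 - c2 <> 0.
Proof.
  rewrite c1_sub_c2. apply Rmult_integral_contrapositive. split.
  - apply Rmult_integral_contrapositive. split; lra.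
  - apply Rinv_neq_0_compat, Rgt_not_eq. repeat apply Rmult_lt_0_compat; lra.
Qed.

Lemma phaseA_ctr : phaseA alpha g0 lam kappa0 omega n dtau b b' = kappa0 * (c1 - c2) + xi * c2.
Proof. unfold phaseA, xi, c1, c2, ctr. field. repeat split; lra. Qed.

Lemma phaseB_ctr : phaseB alpha g0 lam kappa0 omega n dtau b b' = kappa0 * (c1 - c2) - xi * c1.
Proof. unfold phaseB, xi, c1, c2, ctr. field. repeat split; lra. Qed.

(* at 2 kappa0 = xi the two phases are opposite *)
Lemma V_eq_0_at_threshold : 2 * kappa0 - omega * alpha * g0 * n * dtau = 0 ->
  V_re alpha g0 lam kappa0 omega n dtau b b' = 0 /\
  V_im alpha g0 lam kappa0 omega n dtau b b' = 0.
Proof.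
  intros Hxi. unfold V_re, V_im. rewrite phaseA_ctr, phaseB_ctr.
  replace xi with (2 * kappa0) by (unfold xi; lra).
  replace (kappa0 * (c1 - c2) - 2 * kappa0 * c1)
    with (- (kappa0 * (c1 - c2) + 2 * kappa0 * c2)) by ring.
  rewrite sin_neg, cos_neg. split; unfold Rdiv; ring.
Qed.

Lemma rhs_re_eq : rhs_re alpha g0 lam kappa0 omega n dtau b b'
  = / (kappa0 * PI) * sinc_product_integral xi kappa0 c1 c2 0.
Proof.
  unfold rhs_re. rewrite Rmult_assoc, (Rmult_comm (V_im _ _ _ _ _ _ _ _ _)).
  rewrite Heaviside_mul_eq_sign by (intros H; now apply V_eq_0_at_threshold).
  unfold V_im, sinc_product_integral. rewrite phaseA_ctr, phaseB_ctr, !Rminus_0_r.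
  replace (2 * kappa0 - omega * alpha * g0 * n * dtau) with (2 * kappa0 - xi) by (unfold xi; ring).
  replace (- (kappa0 * (c1 - c2)) - xi * c2) with (- (kappa0 * (c1 - c2) + xi * c2)) by ring.
  rewrite sin_neg, c1_sub_c2. pose proof PI_RGT_0. field. repeat split; lra.
Qed.

Lemma rhs_im_eq : rhs_im alpha g0 lam kappa0 omega n dtau b b'
  = / (kappa0 * PI) * sinc_product_integral xi kappa0 c1 c2 (PI / 2).
Proof.
  unfold rhs_im. rewrite Rmult_assoc, (Rmult_comm (V_re _ _ _ _ _ _ _ _ _)).
  rewrite Heaviside_mul_eq_sign by (intros H; now apply V_eq_0_at_threshold).
  assert (sin_sub_PI2 : forall x, sin (x - PI / 2) = - cos x)
    by (intros; rewrite sin_minus, sin_PI2, cos_PI2; ring).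
  unfold V_re, sinc_product_integral. rewrite phaseA_ctr, phaseB_ctr, !sin_sub_PI2.
  replace (2 * kappa0 - omega * alpha * g0 * n * dtau) with (2 * kappa0 - xi) by (unfold xi; ring).
  replace (- (kappa0 * (c1 - c2)) - xi * c2) with (- (kappa0 * (c1 - c2) + xi * c2)) by ring.
  rewrite cos_neg, c1_sub_c2. pose proof PI_RGT_0. field. repeat split; lra.
Qed.

Let sinc_product (th q : R) : R :=
  cos (xi * q + th) * Ksinc kappa0 (q - c1) * Ksinc kappa0 (q - c2).

Let continuous_sinc_product th x : continuous (sinc_product th) x.
Proof.
  unfold sinc_product.
  apply continuous_mulR; [apply continuous_mulR|];
    try (apply continuous_shiftR with (f := Ksinc kappa0); apply continuous_Ksinc).
  apply (ex_derive_continuous (V := R_NormedModule)). auto_derive. auto.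
Qed.

Let improper_sinc_product th :
  improper_RInt (fun q => / (kappa0 * PI) * sinc_product th q)
    (/ (kappa0 * PI) * sinc_product_integral xi kappa0 c1 c2 th).
Proof.
  apply improper_RInt_scal; [apply continuous_sinc_product|].
  apply improper_RInt_cos_sinc_sinc; auto. lra.
Qed.

Lemma integrand_re_eq q :
  integrand_re alpha g0 lam kappa0 omega n dtau b b' q = / (kappa0 * PI) * sinc_product 0 q.
Proof. unfold integrand_re, sinc_product. rewrite Rplus_0_r. fold xi c1 c2. ring. Qed.

Lemma integrand_im_eq q :
  integrand_im alpha g0 lam kappa0 omega n dtau b b' q = / (kappa0 * PI) * sinc_product (PI / 2) q.
Proof.
  unfold integrand_im, sinc_product. rewrite cos_plus, cos_PI2, sin_PI2. fold xi c1 c2. ring.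
Qed.

Lemma I_kl_formula :
  improper_integral (integrand_re alpha g0 lam kappa0 omega n dtau b b')
    (rhs_re alpha g0 lam kappa0 omega n dtau b b') /\
  improper_integral (integrand_im alpha g0 lam kappa0 omega n dtau b b')
    (rhs_im alpha g0 lam kappa0 omega n dtau b b').
Proof.
  split; apply improper_integral_of_improper_RInt.
  - intros x. eapply continuous_ext;
      [intros; symmetry; apply integrand_re_eq|apply continuous_mulR; [apply continuous_const|apply continuous_sinc_product]].
  - rewrite rhs_re_eq. eapply improper_RInt_ext;
      [intros; symmetry; apply integrand_re_eq|apply improper_sinc_product].
  - intros x. eapply continuous_ext;
      [intros; symmetry; apply integrand_im_eq|apply continuous_mulR; [apply continuous_const|apply continuous_sinc_product]].
  - rewrite rhs_im_eq. eapply improper_RInt_ext;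
      [intros; symmetry; apply integrand_im_eq|apply improper_sinc_product].
Qed.

Lemma rhs_eq_0_beyond_threshold : 2 * kappa0 <= omega * alpha * g0 * n * dtau ->
  rhs_re alpha g0 lam kappa0 omega n dtau b b' = 0 /\
  rhs_im alpha g0 lam kappa0 omega n dtau b b' = 0.
Proof.
  intros Hge. unfold rhs_re, rhs_im.
  destruct (Req_dec (2 * kappa0 - omega * alpha * g0 * n * dtau) 0) as [E|E].
  - destruct (V_eq_0_at_threshold E) as [-> ->]. split; ring.
  - unfold Heaviside. destruct (Rle_dec 0 (2 * kappa0 - omega * alpha * g0 * n * dtau)); [lra|].
    split; ring.
Qed.

End Decoherence.

Theorem mainTheorem6 (alpha g0 lam kappa0 omega : R) (k l : nat) :
  0 < alpha -> 0 < g0 -> 0 < lam -> 0 < kappa0 -> 0 < omega -> (l < k)%nat ->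
  let n := INR (k - l) in
  (forall dtau b b' : R, 0 < dtau -> b <> b' ->
     improper_integral (integrand_re alpha g0 lam kappa0 omega n dtau b b')
       (rhs_re alpha g0 lam kappa0 omega n dtau b b') /\
     improper_integral (integrand_im alpha g0 lam kappa0 omega n dtau b b')
       (rhs_im alpha g0 lam kappa0 omega n dtau b b')) /\
  (forall b b' : R, b <> b' ->
     let dtau := 2 * kappa0 / (alpha * g0 * omega * n) in
     V_re alpha g0 lam kappa0 omega n dtau b b' = 0 /\
     V_im alpha g0 lam kappa0 omega n dtau b b' = 0) /\
  (forall dtau b b' : R, 0 < dtau -> b <> b' ->
     2 * kappa0 / (alpha * g0 * omega) <= dtau ->
     improper_integral (integrand_re alpha g0 lam kappa0 omega n dtau b b') 0 /\
     improper_integral (integrand_im alpha g0 lam kappa0 omega n dtau b b') 0).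
Proof.
  intros Ha Hg Hl Hk Ho Hkl n.
  assert (Hn : 1 <= n) by (unfold n; rewrite <- INR_1; apply le_INR; lia).
  assert (Hagw : 0 < alpha * g0 * omega) by (repeat apply Rmult_lt_0_compat; lra).
  split; [|split].
  - intros dtau b b' Hdt Hbb. apply I_kl_formula; auto; lra.
  - intros b b' Hbb dtau.
    assert (Hdt : 0 < dtau) by (apply Rdiv_lt_0_compat; [lra|]; apply Rmult_lt_0_compat; lra).
    apply (V_eq_0_at_threshold alpha g0 lam kappa0 omega n dtau); auto.
    unfold dtau. field. split; lra.
  - intros dtau b b' Hdt Hbb Hge.
    assert (Hthr : 2 * kappa0 <= omega * alpha * g0 * n * dtau).
    { apply (Rmult_le_compat_r (alpha * g0 * omega)) in Hge; [|lra].
      unfold Rdiv in Hge. rewrite Rmult_assoc, Rinv_l, Rmult_1_r in Hge by lra. nra. }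
    destruct (I_kl_formula alpha g0 lam kappa0 omega n dtau b b') as [Hre Him]; auto; try lra.
    destruct (rhs_eq_0_beyond_threshold alpha g0 lam kappa0 omega n dtau b b') as [Z1 Z2];
      auto; try lra.
    rewrite Z1 in Hre. rewrite Z2 in Him. auto.
Qed.
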